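(* Let $\{(\phi^n,\mu^n,R^n,\xi^n)\}$ be generated by Scheme 2B and set $M:=R^0=\sqrt{E[\phi_{in}]}$. Then for all $n\ge0$: $0<R^{n+1}\le R^n\le M$, $0<\xi^{n+1}\le\frac{M}{\sqrt{c_0}}$, and $|\hat\xi^n|\le\frac{3M}{\sqrt{c_0}}$.
   Context: Standing setup: $\Omega\subset\mathbb{R}^d$ ($d=2,3$) is a bounded domain with smooth boundary and outward unit normal $\mathbf{n}$; $\|\cdot\|_0$ is the $L^2(\Omega)$ norm. Let $\lambda\ge 0$, $H(s)=\frac14(s^2-1)^2$, $h(s)=H'(s)=s^3-s$. Fix $c_0>0$ and define $E[\phi]=\int_\Omega\big(\tfrac12|\nabla\phi|^2+\tfrac{\lambda}{2}\phi^2+H(\phi)\big)dx+c_0$ (so $E[\phi]\ge c_0$). Time step $\Delta t>0$. Set $\phi^0=\phi_{in}$, $\mu^0=-\Delta\phi^0+\lambda\phi^0+h(\phi^0)$, $R^0=\sqrt{E[\phi^0]}$, $\phi^{-1}=\phi^0$, $R^{-1}=R^0$. Write $\bar\phi^n=2\phi^n-\phi^{n-1}$, $\bar R^n=2R^n-R^{n-1}$, $\hat\xi^n=\bar R^n/\sqrt{E[\bar\phi^n]}$, $\tilde\phi^{n+1/2}=\frac32\phi^n-\frac12\phi^{n-1}$, $\mu^{n+1/2}=\frac12(\mu^{n+1}+\mu^n)$. Scheme 2B: for $n\ge0$, solve $\frac{3\phi^{n+1}-4\phi^n+\phi^{n-1}}{2\Delta t}=\Delta\mu^{n+1}$, $\mu^{n+1}=-\Delta\phi^{n+1}+\lambda\phi^{n+1}+|\hat\xi^n|^2h(\bar\phi^n)$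 with $\nabla\phi^{n+1}\cdot\mathbf{n}=\nabla\mu^{n+1}\cdot\mathbf{n}=0$ on $\partial\Omega$; then $\frac{R^{n+1}-R^n}{\Delta t}=-\frac{\xi^{n+1}}{2\sqrt{E[\tilde\phi^{n+1/2}]}}\int_\Omega|\nabla\mu^{n+1/2}|^2dx$ with $\xi^{n+1}=R^{n+1}/\sqrt{E[\phi^{n+1}]}$. *)

From HB Require Import structures.
From mathcomp Require Import all_boot all_order all_algebra.
From mathcomp Require Import all_classical all_reals all_analysis.
Set Implicit Arguments. Unset Strict Implicit. Unset Printing Implicit Defensive.
Import Order.TTheory GRing.Theory Num.Theory.
Import numFieldNormedType.Exports.
Local Open Scope classical_set_scope.
Local Open Scope ring_scope.

Section Defs.
Variable R : realType.

Definition evec (d : nat) (i : 'I_d) : 'rV[R]_d := delta_mx 0 i.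

Definition dpart (d : nat) (i : 'I_d) (f : 'rV[R]_d -> R) : 'rV[R]_d -> R :=
  fun x => derive f x (evec i).

Definition diter (d : nat) (s : seq 'I_d) (f : 'rV[R]_d -> R) : 'rV[R]_d -> R :=
  foldr (fun i g => dpart i g) f s.

Definition smooth (d : nat) (f : 'rV[R]_d -> R) : Prop :=
  forall s : seq 'I_d, continuous (diter s f) /\
    forall (i : 'I_d) (x : 'rV[R]_d), derivable (diter s f) x (evec i).

Definition gradsq (d : nat) (f : 'rV[R]_d -> R) (x : 'rV[R]_d) : R :=
  \sum_(i < d) (dpart i f x) ^+ 2.

Definition lap (d : nat) (f : 'rV[R]_d -> R) (x : 'rV[R]_d) : R :=
  \sum_(i < d) dpart i (dpart i f) x.

(* outward unit normal given by a defining function rho (Omega = {rho < 0}) *)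
Definition onormal (d : nat) (rho : 'rV[R]_d -> R) (x : 'rV[R]_d) (i : 'I_d) : R :=
  dpart i rho x / Num.sqrt (gradsq rho x).

Definition ndir (d : nat) (rho : 'rV[R]_d -> R) (f : 'rV[R]_d -> R) (x : 'rV[R]_d) : R :=
  \sum_(i < d) dpart i f x * onormal rho x i.

Definition smooth_bounded_domain (d : nat) (Om : set 'rV[R]_d) (rho : 'rV[R]_d -> R) : Prop :=
  open Om /\ connected Om /\ Om !=set0 /\ bounded_set Om /\
  smooth rho /\ Om = [set x | rho x < 0] /\
  (forall x, rho x = 0 -> gradsq rho x != 0).

Definition bdry (d : nat) (Om : set 'rV[R]_d) : set 'rV[R]_d := closure Om `\` Om.

(* Lebesgue integral over R^d, computed as the iterated (Tonelli) integral
   of an extended-real valued function *)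
Fixpoint iint (n : nat) : ('rV[R]_n -> \bar R) -> \bar R :=
  match n return ('rV[R]_n -> \bar R) -> \bar R with
  | 0 => fun f => f 0
  | m.+1 => fun f =>
      (\int[@lebesgue_measure R]_(t in [set: R])
          iint (fun y : 'rV[R]_m => f (row_mx (\row_(j < 1) t) y)))%E
  end.

Definition integ (d : nat) (Om : set 'rV[R]_d) (g : 'rV[R]_d -> R) : R :=
  fine (iint (fun x => ((\1_Om x : R) * g x)%:E)).

Definition Hpot (s : R) : R := (s ^+ 2 - 1) ^+ 2 / 4.
Definition hpot (s : R) : R := s ^+ 3 - s.

Definition energy (d : nat) (Om : set 'rV[R]_d) (lam c0 : R) (phi : 'rV[R]_d -> R) : R :=
  integ Om (fun x => gradsq phi x / 2 + lam / 2 * phi x ^+ 2 + Hpot (phi x)) + c0.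

(* value at step n-1, with the convention u^{-1} = u^0 *)
Definition prevs (T : Type) (u : nat -> T) (n : nat) : T :=
  match n with 0 => u 0%N | k.+1 => u k end.

Definition phibar (d : nat) (phi : nat -> 'rV[R]_d -> R) (n : nat) : 'rV[R]_d -> R :=
  fun x => 2 * phi n x - prevs phi n x.

Definition phitilde (d : nat) (phi : nat -> 'rV[R]_d -> R) (n : nat) : 'rV[R]_d -> R :=
  fun x => 3 / 2 * phi n x - 1 / 2 * prevs phi n x.

Definition Rbar (Rs : nat -> R) (n : nat) : R := 2 * Rs n - prevs Rs n.

Definition xihat (d : nat) (Om : set 'rV[R]_d) (lam c0 : R)
  (phi : nat -> 'rV[R]_d -> R) (Rs : nat -> R) (n : nat) : R :=
  Rbar Rs n / Num.sqrt (energy Om lam c0 (phibar phi n)).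

Definition xi (d : nat) (Om : set 'rV[R]_d) (lam c0 : R)
  (phi : nat -> 'rV[R]_d -> R) (Rs : nat -> R) (n : nat) : R :=
  Rs n / Num.sqrt (energy Om lam c0 (phi n)).

Definition scheme2B (d : nat) (Om : set 'rV[R]_d) (rho : 'rV[R]_d -> R)
  (lam c0 dt : R) (phi_in : 'rV[R]_d -> R)
  (phi mu : nat -> 'rV[R]_d -> R) (Rs : nat -> R) : Prop :=
  (forall n, smooth (phi n) /\ smooth (mu n)) /\
      phi 0%N = phi_in /\
      (forall x, Om x -> mu 0%N x = - lap (phi 0%N) x + lam * phi 0%N x + hpot (phi 0%N x)) /\
      Rs 0%N = Num.sqrt (energy Om lam c0 (phi 0%N)) /\
      (forall n x, Om x ->
         (3 * phi n.+1 x - 4 * phi n x + prevs phi n x) / (2 * dt) = lap (mu n.+1) x) /\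
      (forall n x, Om x ->
         mu n.+1 x = - lap (phi n.+1) x + lam * phi n.+1 x
                     + (xihat Om lam c0 phi Rs n) ^+ 2 * hpot (phibar phi n x)) /\
      (forall n x, bdry Om x -> ndir rho (phi n.+1) x = 0 /\ ndir rho (mu n.+1) x = 0) /\
    (forall n,
         (Rs n.+1 - Rs n) / dt =
           - (xi Om lam c0 phi Rs n.+1
               / (2 * Num.sqrt (energy Om lam c0 (phitilde phi n))))
             * integ Om (gradsq (fun x => (mu n.+1 x + mu n x) / 2))).

End Defs.

From HB Require Import structures.
From mathcomp Require Import all_boot all_order all_algebra.
From mathcomp Require Import all_classical all_reals all_analysis.
From mathcomp Require Import ring lra.
Set Implicit Arguments. Unset Strict Implicit. Unset Printing Implicit Defensive.
Import Order.TTheory GRing.Theory Num.Theory.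
Import numFieldNormedType.Exports.
Local Open Scope classical_set_scope.
Local Open Scope ring_scope.

(* The argument uses only two features of the scheme: the energy is bounded
   below by c0 (its integrand is nonnegative because lam >= 0), and the update
   of the auxiliary variable R is linearly implicit, i.e. of the form
     (R^{n+1} - R^n)/dt = - (R^{n+1} / s) / (2 q) * I   with s, q > 0, I >= 0,
   so that R^{n+1} = R^n / (1 + dt I / (2 s q)).  Hence R stays positive and is
   nonincreasing, which gives 0 < R^n <= R^0 = M by induction.  The bounds on
   xi^{n+1} = R^{n+1}/sqrt E and on xihat^n = (2 R^n - R^{n-1})/sqrt E then
   follow from sqrt E >= sqrt c0. *)

Lemma iint_ge0 (R : realType) (n : nat) (f : 'rV[R]_n -> \bar R) :
  (forall x, (0 <= f x)%E) -> (0 <= iint f)%E.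
Proof.
elim: n f => [|m IH] f hf /=; first exact: hf.
by apply: integral_ge0 => t _; apply: IH => y; exact: hf.
Qed.

Lemma integ_ge0 (R : realType) (d : nat) (Om : set 'rV[R]_d) (g : 'rV[R]_d -> R) :
  (forall x, 0 <= g x) -> 0 <= integ Om g.
Proof.
move=> hg; apply: fine_ge0; apply: iint_ge0 => x; rewrite lee_fin.
by apply: mulr_ge0 => //; rewrite indicE.
Qed.

Lemma gradsq_ge0 (R : realType) (d : nat) (f : 'rV[R]_d -> R) (x : 'rV[R]_d) :
  0 <= gradsq f x.
Proof. by apply: sumr_ge0 => i _; exact: sqr_ge0. Qed.

Section EnergyLowerBound.
Variables (R : realType) (d : nat) (Om : set 'rV[R]_d) (lam c0 : R).
Hypotheses (lam_ge0 : 0 <= lam) (c0_gt0 : 0 < c0).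

(* For lam >= 0 the energy density is nonnegative, so E[phi] >= c0. *)
Lemma energy_ge_c0 (p : 'rV[R]_d -> R) : c0 <= energy Om lam c0 p.
Proof.
rewrite /energy lerDr; apply: integ_ge0 => x.
apply: addr_ge0; first apply: addr_ge0.
- by apply: divr_ge0 => //; exact: gradsq_ge0.
- by apply: mulr_ge0; [exact: divr_ge0 | exact: sqr_ge0].
- by rewrite /Hpot; apply: divr_ge0 => //; exact: sqr_ge0.
Qed.

Lemma sqrt_energy_ge (p : 'rV[R]_d -> R) :
  Num.sqrt c0 <= Num.sqrt (energy Om lam c0 p).
Proof.
rewrite ler_sqrt; first exact: energy_ge_c0.
exact: le_trans (ltW c0_gt0) (energy_ge_c0 p).
Qed.

Lemma sqrt_energy_gt0 (p : 'rV[R]_d -> R) : 0 < Num.sqrt (energy Om lam c0 p).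
Proof. by apply: lt_le_trans (sqrt_energy_ge p); rewrite sqrtr_gt0. Qed.

End EnergyLowerBound.

Lemma ler_pdiv_bound (R : realFieldType) (x y s c : R) :
  0 <= x -> x <= y -> 0 < c -> c <= s -> x / s <= y / c.
Proof.
move=> hx hxy hc hcs; apply: ler_pM => //.
  by rewrite invr_ge0; apply: le_trans hcs; exact: ltW.
by rewrite lef_pV2 ?posrE //; exact: lt_le_trans hc hcs.
Qed.

(* One step of the linearly implicit R-update: writing a = dt I / (2 s q) >= 0,
   the update reads y (1 + a) = x, so a positive x yields 0 < y <= x. *)
Lemma implicit_update_decay (R : realFieldType) (dt s q I x y : R) :
  0 < dt -> 0 < s -> 0 < q -> 0 <= I -> 0 < x ->
  (y - x) / dt = - (y / s / (2 * q)) * I ->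
  0 < y /\ y <= x.
Proof.
move=> hdt hs hq hI hx e.
set a := dt * I / (s * (2 * q)).
have ha : 0 <= a by apply: divr_ge0; apply: mulr_ge0; lra.
have ya : y - x = - a * y.
  have -> : y - x = (y - x) / dt * dt by field; rewrite gt_eqF.
  by rewrite e /a; field; rewrite !gt_eqF.
split; nra.
Qed.

Lemma scheme2B_R_invariant (R : realType) (d : nat) (Om : set 'rV[R]_d)
    (rho : 'rV[R]_d -> R) (lam c0 dt : R) (phi_in : 'rV[R]_d -> R)
    (phi mu : nat -> 'rV[R]_d -> R) (Rs : nat -> R) :
  0 <= lam -> 0 < c0 -> 0 < dt ->
  scheme2B Om rho lam c0 dt phi_in phi mu Rs ->
  forall n, [/\ 0 < Rs n, Rs n <= Num.sqrt (energy Om lam c0 phi_in)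
              & Rs n.+1 <= Rs n].
Proof.
move=> hlam hc0 hdt [_ [hphi0 [_ [hR0 [_ [_ [_ hRupd]]]]]]].
have step n : 0 < Rs n -> 0 < Rs n.+1 /\ Rs n.+1 <= Rs n.
  move=> hn; apply: implicit_update_decay (hRupd n) => //;
    rewrite ?sqrt_energy_gt0 //.
  by apply: integ_ge0 => x; exact: gradsq_ge0.
have bounded n : 0 < Rs n /\ Rs n <= Num.sqrt (energy Om lam c0 phi_in).
  elim: n => [|n [hpos hM]]; first by rewrite hR0 hphi0 sqrt_energy_gt0.
  have [hpos' hdec] := step n hpos; split=> //; exact: le_trans hdec hM.
move=> n; have [hpos hM] := bounded n.
by have [_ hdec] := step n hpos.
Qed.

Theorem mainTheorem16 (R : realType) (d : nat) (Om : set 'rV[R]_d)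
  (rho : 'rV[R]_d -> R) (lam c0 dt : R) (phi_in : 'rV[R]_d -> R)
  (phi mu : nat -> 'rV[R]_d -> R) (Rs : nat -> R) :
  (d = 2%N \/ d = 3%N) ->
  smooth_bounded_domain Om rho ->
  0 <= lam -> 0 < c0 -> 0 < dt ->
  scheme2B Om rho lam c0 dt phi_in phi mu Rs ->
  let M := Num.sqrt (energy Om lam c0 phi_in) in
  forall n : nat,
    (0 < Rs n.+1 /\ Rs n.+1 <= Rs n /\ Rs n <= M) /\
    (0 < xi Om lam c0 phi Rs n.+1 /\ xi Om lam c0 phi Rs n.+1 <= M / Num.sqrt c0) /\
    `|xihat Om lam c0 phi Rs n| <= 3 * M / Num.sqrt c0.
Proof.
move=> _ _ hlam hc0 hdt hscheme M n.
have inv : forall k, [/\ 0 < Rs k, Rs k <= M & Rs k.+1 <= Rs k]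
  := scheme2B_R_invariant hlam hc0 hdt hscheme.
have [hpos hM hdec] := inv n.
have [hpos1 hM1 _] := inv n.+1.
have sqrtE_ge p := sqrt_energy_ge Om hlam hc0 p.
have sqrtE_gt0 p := sqrt_energy_gt0 Om hlam hc0 p.
have hc0' : 0 < Num.sqrt c0 by rewrite sqrtr_gt0.
have [hprev hprevM] : 0 < prevs Rs n /\ prevs Rs n <= M.
  by case: n {hpos hM hdec hpos1 hM1} => [|k] /=; [case: (inv 0%N) | case: (inv k)].
split; first by [].
split.
  split; first by apply: divr_gt0.
  by apply: ler_pdiv_bound => //; exact: ltW.
rewrite /xihat /Rbar normrM normfV (gtr0_norm (sqrtE_gt0 _)).
apply: ler_pdiv_bound => //.
by rewrite ler_norml; apply/andP; split; lra.
Qed.
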